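(* (Laplace.) Let $\hat p^{l}_i=\frac{N_i}{ms}+\frac{Z_i}{ms}$ for $i\in[k]$, where $Z_1,\dots,Z_k$ are i.i.d. $\mathrm{Lap}(2m/\varepsilon)$. Then its user complexity satisfies $S^{l}_{m,\alpha,\varepsilon,0}=\mathcal O\left(\frac{k}{m\alpha^2}+\frac{k}{\alpha\varepsilon}\right)$. (Gaussian.) If $\varepsilon\le1$, let $\hat p^{g}_i=\frac{N_i}{ms}+\frac{Z_i}{ms}$ where $Z_i$ are i.i.d. $\mathcal N(0,4\log(1.25/\delta)m^2/\varepsilon^2)$. Then $S^{g}_{m,\alpha,\varepsilon,\delta}=\mathcal O\left(\frac{k}{m\alpha^2}+\frac{k}{\alpha\varepsilon}\sqrt{\log\frac1\delta}\right)$.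
   Context: Let $\Delta_k$ be the set of distributions on $[k]=\{1,\dots,k\}$. There are $s$ users each holding $m$ samples, all $sm$ samples i.i.d. from $p\in\Delta_k$; $N_i$ is the total number of samples over all users equal to $i$. For an estimator $A$ with output $\hat p^A$, $L(A,s,m,p)=\mathbb{E}[\sum_i|p_i-\hat p^A_i|]$ and the user complexity is $S^A_{m,\alpha,\varepsilon,\delta}=\min\{s:\sup_{p\in\Delta_k}L(A,s,m,p)\le\alpha\}$. $\mathrm{Lap}(b)$ is the Laplace distribution with density $\frac{1}{2b}e^{-|x|/b}$. Constants in $\mathcal O$ are universal. *)

From HB Require Import structures.
From mathcomp Require Import all_boot all_order all_algebra.
From mathcomp Require Import all_classical all_reals all_analysis.
Set Implicit Arguments. Unset Strict Implicit. Unset Printing Implicit Defensive.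
Import Order.TTheory GRing.Theory Num.Theory.
Local Open Scope classical_set_scope.
Local Open Scope ring_scope.

Definition in_simplex {R : realType} (k : nat) (p : 'I_k -> R) : Prop :=
  (forall i, 0 <= p i) /\ \sum_(i < k) p i = 1.

Definition laplace_pdf {R : realType} (b x : R) : R :=
  (2 * b)^-1 * expR (- `|x| / b).
Definition laplace_prob {R : realType} (b : R) : set R -> \bar R :=
  fun V => (\int[lebesgue_measure]_(x in V) (laplace_pdf b x)%:E)%E.

Definition iid_with_law {R : realType} (d : measure_display)
  (T : measurableType d) (P : probability T R) (k : nat)
  (Z : 'I_k -> T -> R) (mu : set R -> \bar R) : Prop :=
  (forall i, measurable_fun setT (Z i)) /\
  (forall B : 'I_k -> set R, (forall i, measurable (B i)) ->
     fine (P (\bigcap_(i in [set: 'I_k]) (Z i @^-1` B i)))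
     = \prod_(i < k) fine (mu (B i))).

Definition count_of (n k : nat) (x : {ffun 'I_n -> 'I_k}) (i : 'I_k) : nat :=
  #|[pred j | x j == i]|.

(* Expected l1 loss L(A,s,m,p) of the estimator
     phat_i = N_i/(ms) + Z_i/(ms),
   where the s*m samples x are i.i.d. from p (expectation over them written
   as the finite sum over all outcomes) and the noise Z, independent of the
   samples, lives on the probability space P. *)
Definition noisy_loss {R : realType} (d : measure_display)
  (T : measurableType d) (P : probability T R) (k s m : nat)
  (p : 'I_k -> R) (Z : 'I_k -> T -> R) : \bar R :=
  (\sum_(x : {ffun 'I_(s * m) -> 'I_k})
     (\prod_(j < s * m) p (x j))%:E *
     'E_P[(fun t => \sum_(i < k)
            `|p i - ((count_of x i)%:R / (m * s)%:R + Z i t / (m * s)%:R)|)%R])%E.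

Definition loss_ok {R : realType} (k m s : nat) (mu : set R -> \bar R)
  (alpha : R) : Prop :=
  forall (p : 'I_k -> R), in_simplex p ->
  forall (d : measure_display) (T : measurableType d) (P : probability T R)
    (Z : 'I_k -> T -> R), iid_with_law P Z mu ->
    (noisy_loss P s m p Z <= alpha%:E)%E.

(* "S <= B" where S = min { s >= 1 : sup_p L(s,m,p) <= alpha } is the
   user complexity. *)
Definition user_complexity_le {R : realType} (k m : nat)
  (mu : set R -> \bar R) (alpha B : R) : Prop :=
  exists s : nat, (0 < s)%N /\ s%:R <= B /\ loss_ok k m s mu alpha.

From HB Require Import structures.
From mathcomp Require Import all_boot all_order all_algebra.
From mathcomp Require Import all_classical all_reals all_analysis.
From mathcomp Require Import ring lra measurable_realfun.
Import Order.TTheory GRing.Theory Num.Theory.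
Local Open Scope classical_set_scope.
Local Open Scope ring_scope.
Set Implicit Arguments. Unset Strict Implicit. Unset Printing Implicit Defensive.

(** The loss splits, by the triangle inequality, into the sampling error of the
  empirical frequencies [N_i / n] ([n = m s]) and the rescaled noise [Z_i / n].
  Coordinatewise, [|y| <= (y^2 / c + c) / 2] and [Var (N_i / n) = p_i (1 - p_i) / n]
  bound the expected sampling error by [((n c)^-1 + k c) / 2], which is
  [k / (n alpha) + alpha / 4] for [c = alpha / (2 k)].  The noise costs
  [k E|Z| / n], and [E|Z|] is of the order of the noise scale for both laws:
  a density with [f x <= c / 4 ^ j] whenever [|x| >= j h] has [E|Z| <= 4 h^2 c],
  by summing over the shells [j h <= |x| < (j + 1) h].  Hence the loss is at
  most [alpha] as soon as [n >= 4 k / alpha^2] and [n >= 2 k E|Z| / alpha]. *)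

Section EmpiricalDistribution.
Variables (R : realType) (k n : nat) (p : 'I_k -> R).

Definition sample_prob (x : {ffun 'I_n -> 'I_k}) : R := \prod_(j < n) p (x j).

Lemma count_ofE (x : {ffun 'I_n -> 'I_k}) (i : 'I_k) :
  (count_of x i)%:R = \sum_(j < n) ((x j == i)%:R : R).
Proof.
rewrite /count_of -sum1_card natr_sum big_mkcond /=.
by apply: eq_bigr => j _; rewrite inE; case: (x j == i).
Qed.

Hypothesis hp : in_simplex p.

Lemma sample_prob_ge0 x : 0 <= sample_prob x.
Proof. by apply: prodr_ge0 => j _; exact: (proj1 hp). Qed.

Lemma sum_sample_prob : \sum_x sample_prob x = 1.
Proof.
rewrite /sample_prob -(bigA_distr_bigA (fun _ y => p y)) /=.
by rewrite big1 // => j _; exact: (proj2 hp).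
Qed.

Variable i : 'I_k.

Definition centered_ind (y : 'I_k) : R := (y == i)%:R - p i.

Lemma sum_mul_ind : \sum_(y < k) p y * (y == i)%:R = p i.
Proof.
rewrite (bigD1 i) //= eqxx mulr1 big1 ?addr0 // => y /negbTE ->.
by rewrite mulr0.
Qed.

Lemma mean_centered_ind : \sum_(y < k) p y * centered_ind y = 0.
Proof.
under eq_bigr do rewrite mulrBr.
by rewrite sumrB sum_mul_ind -mulr_suml (proj2 hp) mul1r subrr.
Qed.

Lemma var_centered_ind :
  \sum_(y < k) p y * (centered_ind y * centered_ind y) = p i - p i ^+ 2.
Proof.
have sq y : p y * (centered_ind y * centered_ind y) =
    p y * (y == i)%:R * (1 - 2 * p i) + p y * p i ^+ 2.
  by rewrite /centered_ind; case: (y == i) => /=; ring.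
under eq_bigr do rewrite sq.
by rewrite big_split /= -!mulr_suml sum_mul_ind (proj2 hp); ring.
Qed.

Lemma covariance_centered_ind (a b : 'I_n) :
  \sum_x sample_prob x * (centered_ind (x a) * centered_ind (x b)) =
  if a == b then p i - p i ^+ 2 else 0.
Proof.
pose g (j : 'I_n) (y : 'I_k) :=
  p y * ((if j == a then centered_ind y else 1) *
         (if j == b then centered_ind y else 1)).
(* The samples are independent: the weight of [x] is a product over the
   coordinates, hence so is the sum over all [x]. *)
have factorize x : sample_prob x * (centered_ind (x a) * centered_ind (x b)) =
    \prod_(j < n) g j (x j).
  rewrite /g /sample_prob !big_split /= -!big_mkcond /=.
  by rewrite !big_pred1_eq mulrA.
under eq_bigr do rewrite factorize.
rewrite -(bigA_distr_bigA g) (bigD1 a) //=.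
have other_j (j : 'I_n) : j != a ->
    \sum_(y < k) g j y = if j == b then 0 else 1.
  move=> /negbTE ja; rewrite /g ja; case: eqVneq => _ /=.
    by under eq_bigr do rewrite mul1r; exact: mean_centered_ind.
  by under eq_bigr do rewrite !mulr1; exact: (proj2 hp).
have [ab|ab] := eqVneq a b.
  subst b; rewrite [X in _ * X]big1 ?mulr1 => [|j ja]; last first.
    by rewrite other_j // (negbTE ja).
  by rewrite /g; under eq_bigr do rewrite eqxx; exact: var_centered_ind.
rewrite /g eqxx (negbTE ab).
by under eq_bigr do rewrite mulr1; rewrite mean_centered_ind mul0r.
Qed.

Lemma variance_count :
  \sum_x sample_prob x * (\sum_(j < n) centered_ind (x j)) ^+ 2 =
  n%:R * (p i - p i ^+ 2).
Proof.
have expand x : sample_prob x * (\sum_(j < n) centered_ind (x j)) ^+ 2 =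
    \sum_(a < n) \sum_(b < n)
      sample_prob x * (centered_ind (x a) * centered_ind (x b)).
  rewrite expr2 mulr_suml mulr_sumr; apply: eq_bigr => a _.
  by rewrite !mulr_sumr.
under eq_bigr do rewrite expand.
rewrite exchange_big /=; under eq_bigr do rewrite exchange_big /=.
under eq_bigr do under eq_bigr do rewrite covariance_centered_ind.
under eq_bigr => a _ do rewrite -big_mkcond /= (big_pred1 a) //=.
by rewrite sumr_const card_ord mulr_natl.
Qed.

Lemma expected_sqr_deviation : (0 < n)%N ->
  \sum_x sample_prob x * (p i - (count_of x i)%:R / n%:R) ^+ 2 =
  (p i - p i ^+ 2) / n%:R.
Proof.
move=> n_gt0; have n_neq0 : (n%:R : R) != 0 by rewrite pnatr_eq0 -lt0n.
have dev x : p i - (count_of x i)%:R / n%:R =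
    - (\sum_(j < n) centered_ind (x j)) / n%:R.
  by rewrite /centered_ind sumrB sumr_const card_ord -count_ofE; field.
under eq_bigr do rewrite dev exprMn sqrrN mulrA.
by rewrite -mulr_suml variance_count; field.
Qed.

End EmpiricalDistribution.

Lemma normr_le_amgm (R : realFieldType) (y c : R) :
  0 < c -> `|y| <= (y ^+ 2 / c + c) / 2.
Proof.
move=> c_gt0; rewrite -[y ^+ 2](real_normK (num_real y)).
rewrite ler_pdivlMr // -subr_ge0.
have -> : (`|y| ^+ 2 / c + c) - `|y| * 2 = (`|y| - c) ^+ 2 / c.
  by field; rewrite gt_eqF.
by rewrite divr_ge0 ?sqr_ge0 ?ltW.
Qed.

Lemma expected_empirical_l1_le (R : realType) (k n : nat) (p : 'I_k -> R)
    (c : R) : in_simplex p -> 0 < c -> (0 < n)%N ->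
  \sum_(x : {ffun 'I_n -> 'I_k}) sample_prob p x *
    \sum_(i < k) `|p i - (count_of x i)%:R / n%:R|
  <= ((n%:R * c)^-1 + k%:R * c) / 2.
Proof.
move=> hp c_gt0 n_gt0.
have n_neq0 : (n%:R : R) != 0 by rewrite pnatr_eq0 -lt0n.
have amgm_mean i : \sum_(x : {ffun 'I_n -> 'I_k}) sample_prob p x *
    (((p i - (count_of x i)%:R / n%:R) ^+ 2 / c + c) / 2) =
    ((p i - p i ^+ 2) / (n%:R * c) + c) / 2.
  have split (x : {ffun 'I_n -> 'I_k}) : sample_prob p x *
      (((p i - (count_of x i)%:R / n%:R) ^+ 2 / c + c) / 2) =
      sample_prob p x * (p i - (count_of x i)%:R / n%:R) ^+ 2 / (2 * c) +
      sample_prob p x * (c / 2).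
    by field; rewrite gt_eqF.
  under eq_bigr do rewrite split.
  rewrite big_split /= -!mulr_suml expected_sqr_deviation //.
  by rewrite sum_sample_prob //; field; rewrite n_neq0 gt_eqF.
apply: (@le_trans _ _ (\sum_(i < k) ((p i - p i ^+ 2) / (n%:R * c) + c) / 2)).
  under eq_bigr do rewrite mulr_sumr; rewrite exchange_big /=.
  apply: ler_sum => i _; rewrite -amgm_mean.
  apply: ler_sum => x _; rewrite ler_wpM2l ?sample_prob_ge0 //.
  exact: normr_le_amgm.
apply: (@le_trans _ _ (\sum_(i < k) (p i / (n%:R * c) + c) / 2)).
  apply: ler_sum => i _; rewrite ler_pM2r // lerD2r ler_pM2r ?invr_gt0 //.
    by rewrite gerBl sqr_ge0.
  by rewrite mulr_gt0 // ltr0n.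
rewrite -mulr_suml big_split /= -mulr_suml (proj2 hp) sumr_const card_ord.
by rewrite mul1r !mulr_natl.
Qed.

Definition has_law (R : realType) (d : measure_display) (T : measurableType d)
    (P : probability T R) (Z : T -> R) (mu : set R -> \bar R) : Prop :=
  forall B, measurable B -> P (Z @^-1` B) = (fine (mu B))%:E.

Definition law_abs_moment_le (R : realType) (mu : set R -> \bar R) (K : R) : Prop :=
  forall d (T : measurableType d) (P : probability T R) (Z : T -> R),
    measurable_fun setT Z -> has_law P Z mu -> (\int[P]_t (`|Z t|)%:E <= K%:E)%E.

Section IidMarginal.
Variables (R : realType) (d : measure_display) (T : measurableType d)
  (P : probability T R) (k : nat) (Z : 'I_k -> T -> R) (mu : set R -> \bar R).
Hypotheses (hZ : iid_with_law P Z mu) (mu_ge0 : forall B, (0 <= mu B)%E).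

Lemma iid_fine_law_setT (i : 'I_k) : fine (mu setT) = 1.
Proof.
have := proj2 hZ (fun _ => setT) (fun _ => measurableT).
have -> : \bigcap_(j in [set: 'I_k]) (Z j @^-1` setT) = setT.
  by apply/seteqP; split => // t _ j _.
rewrite probability_setT /= prodr_const card_ord => /esym /eqP.
rewrite pexpr_eq1 ?fine_ge0 //; first by move/eqP.
by case: i => [i ik]; apply: leq_ltn_trans ik.
Qed.

Lemma iid_has_law (i : 'I_k) : has_law P (Z i) mu.
Proof.
move=> B mB.
pose Bi j := if j == i then B else setT.
have mBi j : measurable (Bi j) by rewrite /Bi; case: (j == i).
have -> : Z i @^-1` B = \bigcap_(j in [set: 'I_k]) (Z j @^-1` Bi j).
  apply/seteqP; split => t /=; last by move=> /(_ i I); rewrite /Bi eqxx.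
  by move=> Bt j _; rewrite /Bi; case: eqVneq => [->|].
have -> : fine (mu B) = \prod_(j < k) fine (mu (Bi j)).
  rewrite (bigD1 i) //= /Bi eqxx big1 ?mulr1 // => j /negbTE ->.
  exact: iid_fine_law_setT.
rewrite -(proj2 hZ _ mBi) fineK // fin_num_measure //.
apply: fin_bigcap_measurable => // j _.
by rewrite -[_ @^-1` _]setTI; exact: (proj1 hZ j).
Qed.

End IidMarginal.

Section AbsMomentOfDecayingDensity.
Variables (R : realType) (h : R).
Hypothesis h_gt0 : 0 < h.

Definition shell (n : nat) : set R :=
  `[n%:R * h, n.+1%:R * h[ `|` `]- (n.+1%:R * h), - (n%:R * h)].

Lemma measurable_shell n : measurable (shell n).
Proof. by apply: measurableU; exact: measurable_itv. Qed.

Lemma shell_normr_ge n x : shell n x -> n%:R * h <= `|x|.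
Proof.
have := ler_norm x; have := ler_norm (- x); rewrite normrN.
by move=> ? ?; case => /=; rewrite in_itv /= => /andP [] ? ?; lra.
Qed.

Lemma shell_truncn x : shell (Num.truncn (`|x| / h)) x.
Proof.
have /andP [lo hi] := truncn_itv (divr_ge0 (normr_ge0 x) (ltW h_gt0)).
set N := Num.truncn _ in lo hi *.
rewrite ler_pdivlMr // in lo; rewrite ltr_pdivrMr // in hi.
case: (lerP 0 x) => x0.
  by left; rewrite /= in_itv /=; rewrite ger0_norm // in lo hi; rewrite lo hi.
right; rewrite /= in_itv /=; rewrite ltr0_norm // in lo hi.
by apply/andP; split; lra.
Qed.

Lemma lebesgue_shell_le n : (lebesgue_measure (shell n) <= (2 * h)%:E)%E.
Proof.
have l1 : n%:R * h < n.+1%:R * h by rewrite ltr_pM2r // ltr_nat.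
have l2 : - (n.+1%:R * h) < - (n%:R * h) by rewrite ltrN2.
have e1 := lebesgue_measure_itv `[n%:R * h, n.+1%:R * h[%R.
have e2 := lebesgue_measure_itv `]- (n.+1%:R * h), - (n%:R * h)]%R.
rewrite /= !lte_fin l1 l2 in e1 e2.
apply: (le_trans (measureU2 lebesgue_measure _ _)); try exact: measurable_itv.
rewrite [X in (X + _)%E]e1 [X in (_ + X)%E]e2 -!EFinD lee_fin.
by rewrite -[n.+1]addn1 natrD; lra.
Qed.

Lemma normr_le_shell_series (z : R) :
  ((`|z|)%:E <= \sum_(n <oo) (n.+1%:R * h * \1_(shell n) z)%:E)%E.
Proof.
set N := Num.truncn (`|z| / h).
have term_ge0 n : (0 <= (n.+1%:R * h * \1_(shell n) z)%:E)%E.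
  by rewrite lee_fin mulr_ge0 ?indicE // mulr_ge0 // ltW.
apply: (le_trans _ (nneseries_lim_ge (m := 0) N.+1 (fun n _ _ => term_ge0 n))).
rewrite big_nat_recr //=.
apply: (le_trans _ (leeDr _ (sume_ge0 (fun n _ => term_ge0 n) _))).
rewrite indicE mem_set; last exact: shell_truncn.
rewrite /= mulr1 lee_fin.
have /andP [_ hi] := truncn_itv (divr_ge0 (normr_ge0 z) (ltW h_gt0)).
by apply: ltW; rewrite -ltr_pdivrMr.
Qed.

Variables (f : R -> R) (c : R).
Hypotheses (f_ge0 : forall x, 0 <= f x) (measurable_f : measurable_fun setT f).
Hypothesis c_ge0 : 0 <= c.
Hypothesis f_decay : forall (n : nat) x, n%:R * h <= `|x| -> f x <= c / 4 ^+ n.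

Lemma integral_shell_le n :
  fine (\int[lebesgue_measure]_(x in shell n) (f x)%:E) <= 2 * h * (c / 4 ^+ n).
Proof.
have cn_ge0 : 0 <= c / 4 ^+ n by rewrite divr_ge0 // exprn_ge0.
have int_ge0 : (0 <= \int[lebesgue_measure]_(x in shell n) (f x)%:E)%E.
  by apply: integral_ge0 => x _; rewrite lee_fin.
suff : (\int[lebesgue_measure]_(x in shell n) (f x)%:E <=
        (2 * h * (c / 4 ^+ n))%:E)%E.
  by move: int_ge0; case: (\int[_]_(_ in _) _)%E.
apply: (@le_trans _ _ (\int[lebesgue_measure]_(x in shell n) (c / 4 ^+ n)%:E)%E).
  apply: ge0_le_integral => //.
  - exact: measurable_shell.
  - by move=> x _; rewrite lee_fin.
  - by apply/measurable_EFinP; apply: measurable_funTS.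
  - by move=> x /shell_normr_ge Bx; rewrite lee_fin; exact: f_decay.
rewrite integral_cst; last exact: measurable_shell.
rewrite (mulrC (2 * h)) [X in (_ <= X)%E]EFinM.
by apply: lee_wpmul2l; [rewrite lee_fin | exact: lebesgue_shell_le].
Qed.

Lemma shell_moment_le (n : nat) :
  n.+1%:R * h * (2 * h * (c / 4 ^+ n)) <= 4 * h ^+ 2 * c / (2 ^ (n + 1))%:R.
Proof.
have pow4 : (4 : R) ^+ n = 2 ^+ n * 2 ^+ n by rewrite -exprMn; congr (_ ^+ _); lra.
have n_le_pow2 : (n.+1%:R : R) <= 2 ^+ n by rewrite -natrX ler_nat ltn_expl.
have pow2_gt0 : (0 : R) < 2 ^+ n by rewrite exprn_gt0.
rewrite natrX exprD expr1 pow4.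
have -> : n.+1%:R * h * (2 * h * (c / (2 ^+ n * 2 ^+ n))) =
    (n.+1%:R / 2 ^+ n) * (2 * h ^+ 2 * c / 2 ^+ n) by field; rewrite gt_eqF.
have -> : 4 * h ^+ 2 * c / (2 ^+ n * 2) = 1 * (2 * h ^+ 2 * c / 2 ^+ n).
  by field; rewrite gt_eqF.
apply: ler_wpM2r; last by rewrite ler_pdivrMr // mul1r.
by rewrite divr_ge0 ?exprn_ge0 // !mulr_ge0 // ltW.
Qed.

Lemma abs_moment_le_of_density_decay :
  law_abs_moment_le (fun B => \int[lebesgue_measure]_(x in B) (f x)%:E)%E
    (4 * h ^+ 2 * c).
Proof.
move=> d T P Z mZ lawZ.
have mZshell n : measurable (Z @^-1` shell n).
  by rewrite -[X in measurable X]setTI; exact: mZ (measurable_shell n).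
pose g (n : nat) (t : T) := (n.+1%:R * h * \1_(Z @^-1` shell n) t)%:E.
have mg n : measurable_fun setT (g n).
  by apply/measurable_EFinP; apply: measurable_funM => //; exact: measurable_indic.
have g_ge0 n t : (0 <= g n t)%E.
  by rewrite lee_fin mulr_ge0 ?indicE // mulr_ge0 // ltW.
have integral_g n : (\int[P]_t g n t)%E =
    (n.+1%:R * h * fine (\int[lebesgue_measure]_(x in shell n) (f x)%:E))%:E.
  under eq_integral do rewrite /g EFinM.
  rewrite ge0_integralZl_EFin //; last 2 first.
  - by apply/measurable_EFinP; exact: measurable_indic.
  - by rewrite mulr_ge0 // ltW.
  rewrite integral_indic // setIT.
  by rewrite [X in (_ * X)%E](lawZ _ (measurable_shell n)) -EFinM.
apply: (@le_trans _ _ (\int[P]_t (\sum_(n <oo) g n t))%E).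
  apply: ge0_le_integral => //.
  - by apply/measurable_EFinP; apply: measurableT_comp.
  - exact: ge0_emeasurable_sum.
  - move=> t _; apply: (le_trans (normr_le_shell_series (Z t))).
    by apply: lee_nneseries => [n _ _|n _]; [exact: (g_ge0 n t) | exact: lexx].
rewrite integral_nneseries //.
apply: (@le_trans _ _ (\sum_(n <oo) (4 * h ^+ 2 * c / (2 ^ (n + 1))%:R)%:E)%E).
  apply: lee_nneseries => [n _ _|n _]; first exact: integral_ge0.
  rewrite integral_g lee_fin; apply: le_trans (shell_moment_le n).
  by rewrite ler_wpM2l ?integral_shell_le // mulr_ge0 // ltW.
have := @cvg_geometric_eseries_half R (4 * h ^+ 2 * c) 0.
by rewrite expr0 divr1 => /cvg_lim ->.
Qed.

End AbsMomentOfDecayingDensity.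

Section NoiseAbsMoments.
Variable R : realType.

Lemma expRN_le_inv_pow4 (n : nat) (y : R) :
  2 * n%:R <= y -> expR (- y) <= (4 ^+ n)^-1.
Proof.
move=> y_ge.
have e2_ge4 : (4 : R) <= expR 2.
  have := expR_ge1Dx (1 : R).
  have -> : (2 : R) = 2%:R * 1 by rewrite mulr1.
  by rewrite expRM_natl; nra.
apply: (@le_trans _ _ (expR (- (n%:R * 2)))); first by rewrite ler_expR lerN2 mulrC.
rewrite expRN expRM_natl lef_pV2 ?posrE ?exprn_gt0 ?expR_gt0 //.
by apply: lerXn2r; rewrite ?nnegrE ?expR_ge0.
Qed.

Lemma laplace_pdf_ge0 (b x : R) : 0 <= b -> 0 <= laplace_pdf b x.
Proof. by move=> b_ge0; rewrite mulr_ge0 ?expR_ge0 // invr_ge0 mulr_ge0. Qed.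

Lemma measurable_laplace_pdf (b : R) : measurable_fun setT (laplace_pdf b).
Proof.
apply: measurable_funM => //; apply: measurableT_comp; first exact: measurable_expR.
by apply: measurable_funM => //; apply: measurableT_comp => //; exact: normr_measurable.
Qed.

Lemma laplace_abs_moment_le (b : R) :
  0 < b -> law_abs_moment_le (laplace_prob b) (8 * b).
Proof.
move=> b_gt0 d T P Z mZ lawZ.
have pdf_decay (n : nat) x :
    n%:R * (2 * b) <= `|x| -> laplace_pdf b x <= (2 * b)^-1 / 4 ^+ n.
  move=> x_ge; rewrite /laplace_pdf ler_wpM2l ?invr_ge0 //; first lra.
  by rewrite mulNr; apply: expRN_le_inv_pow4; rewrite ler_pdivlMr //; lra.
have := abs_moment_le_of_density_decay (h := 2 * b) (f := laplace_pdf b) _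
  (fun x => laplace_pdf_ge0 x (ltW b_gt0)) (measurable_laplace_pdf b) _
  pdf_decay mZ lawZ.
have -> : 4 * (2 * b) ^+ 2 * (2 * b)^-1 = 8 * b by field; lra.
by apply; rewrite ?invr_ge0; lra.
Qed.

Lemma normal_peak_le_inv (sg : R) : 0 < sg -> normal_peak sg <= sg^-1.
Proof.
move=> sg_gt0; rewrite /normal_peak lef_pV2 ?posrE ?sqrtr_gt0 //; last first.
  by rewrite mulrn_wgt0 // mulr_gt0 ?pi_gt0 // exprn_gt0.
rewrite -[leLHS](gtr0_norm sg_gt0) -sqrtr_sqr ler_sqrt; last first.
  by rewrite mulrn_wge0 // mulr_ge0 ?pi_ge0 // sqr_ge0.
by have := pi_ge2 R; have := sqr_ge0 sg; rewrite mulr2n; nra.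
Qed.

Lemma normal_pdf0_decay (sg : R) (n : nat) (x : R) : 0 < sg ->
  n%:R * (2 * sg) <= `|x| -> normal_pdf 0 sg x <= sg^-1 / 4 ^+ n.
Proof.
move=> sg_gt0 x_ge; rewrite normal_pdfE ?gt_eqF //= /normal_fun subr0.
apply: ler_pM; rewrite ?normal_peak_ge0 ?expR_ge0 ?normal_peak_le_inv //.
rewrite mulNr; apply: expRN_le_inv_pow4.
have n_le_sqr : (n%:R : R) <= n%:R ^+ 2.
  by case: n {x_ge} => [|n]; rewrite ?expr0n // -natrX ler_nat leq_pmulr.
have x2_ge : 4 * n%:R ^+ 2 * sg ^+ 2 <= x ^+ 2.
  rewrite -(real_normK (num_real x)) (_ : 4 * _ * _ = (n%:R * (2 * sg)) ^+ 2).
    by rewrite lerXn2r // nnegrE ?mulr_ge0 //; lra.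
  by ring.
rewrite ler_pdivlMr ?mulrn_wgt0 ?exprn_gt0 // mulr2n.
by have := sqr_ge0 sg; nra.
Qed.

Lemma normal_abs_moment_le (sg : R) :
  0 < sg -> law_abs_moment_le (normal_prob 0 sg) (16 * sg).
Proof.
move=> sg_gt0 d T P Z mZ lawZ.
have := abs_moment_le_of_density_decay (h := 2 * sg) (c := sg^-1) _
  (normal_pdf_ge0 0 sg) (measurable_normal_pdf 0 sg) _
  (fun n x => normal_pdf0_decay sg_gt0) mZ lawZ.
have -> : 4 * (2 * sg) ^+ 2 * sg^-1 = 16 * sg by field; lra.
by apply; rewrite ?invr_ge0; lra.
Qed.

End NoiseAbsMoments.

Section NoisyLoss.
Variables (R : realType) (d : measure_display) (T : measurableType d)
  (P : probability T R) (k : nat) (Z : 'I_k -> T -> R).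
Hypothesis measurable_Z : forall i, measurable_fun setT (Z i).

Lemma integral_sum_scaled_abs_le (N K : R) : 0 < N ->
  (forall i, (\int[P]_t (`|Z i t|)%:E <= K%:E)%E) ->
  (\int[P]_t (\sum_(i < k) N^-1 * `|Z i t|)%:E <= (k%:R * (N^-1 * K))%:E)%E.
Proof.
move=> N_gt0 abs_moment.
have mabs i : measurable_fun setT (fun t => N^-1 * `|Z i t|).
  by apply: measurable_funM => //; apply: measurableT_comp => //; exact: normr_measurable.
have term_ge0 i t : 0 <= N^-1 * `|Z i t| by rewrite mulr_ge0 // invr_ge0 ltW.
under eq_integral do rewrite -sumEFin.
rewrite ge0_integral_sum //; last first.
- by move=> i t _; rewrite lee_fin.
- by move=> i; apply/measurable_EFinP.
apply: (@le_trans _ _ (\sum_(i < k) (N^-1 * K)%:E)%E); last first.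
  by rewrite sumEFin sumr_const card_ord mulr_natl.
apply: lee_sum => i _; under eq_integral do rewrite EFinM.
have mabsZ : measurable_fun setT (fun t => (`|Z i t|)%:E).
  by apply/measurable_EFinP; apply: measurableT_comp => //; exact: normr_measurable.
rewrite ge0_integralZl_EFin // ?invr_ge0 ?(ltW N_gt0) // EFinM.
by apply: lee_wpmul2l; rewrite ?lee_fin ?invr_ge0 ?(ltW N_gt0).
Qed.

Lemma expectation_l1_noise_le (a : 'I_k -> R) (N K : R) : 0 < N ->
  (forall i, (\int[P]_t (`|Z i t|)%:E <= K%:E)%E) ->
  ('E_P[(fun t => \sum_(i < k) `|a i - Z i t / N|)%R] <=
    (\sum_(i < k) `|a i| + k%:R * (N^-1 * K))%:E)%E.
Proof.
move=> N_gt0 abs_moment; rewrite unlock.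
have mscaled : measurable_fun setT (fun t => \sum_(i < k) N^-1 * `|Z i t|).
  apply: measurable_sum => i; apply: measurable_funM => //.
  by apply: measurableT_comp => //; exact: normr_measurable.
apply: (@le_trans _ _ (\int[P]_t ((\sum_(i < k) `|a i|)%:E +
    (\sum_(i < k) N^-1 * `|Z i t|)%:E))%E).
  apply: ge0_le_integral => //.
  - by move=> t _; rewrite lee_fin sumr_ge0.
  - apply/measurable_EFinP; apply: measurable_sum => i.
    apply: measurableT_comp; first exact: normr_measurable.
    by apply: measurable_funB => //; apply: measurable_funM.
  - by apply: emeasurable_funD => //; apply/measurable_EFinP.
  - move=> t _; rewrite -EFinD lee_fin -big_split /=.
    apply: ler_sum => i _; apply: (le_trans (ler_normB _ _)).
    by rewrite normrM normfV (gtr0_norm N_gt0) mulrC.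
rewrite ge0_integralD //; last first.
- by apply/measurable_EFinP.
- by move=> t _; rewrite lee_fin sumr_ge0 // => i _; rewrite mulr_ge0 // invr_ge0 ltW.
- by move=> t _; rewrite lee_fin sumr_ge0.
rewrite integral_cst // [X in (_ * X)%E]probability_setT mule1 EFinD leeD2l //.
exact: integral_sum_scaled_abs_le.
Qed.

End NoisyLoss.

Lemma loss_ok_of_abs_moment (R : realType) (k m s : nat) (mu : set R -> \bar R)
    (alpha K : R) :
  (0 < k)%N -> (0 < m)%N -> (0 < s)%N -> 0 < alpha ->
  (forall B, (0 <= mu B)%E) -> law_abs_moment_le mu K ->
  4 * k%:R <= alpha ^+ 2 * (m * s)%:R -> 2 * k%:R * K <= alpha * (m * s)%:R ->
  loss_ok k m s mu alpha.
Proof.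
move=> k_gt0 m_gt0 s_gt0 alpha_gt0 mu_ge0 abs_moment k_small K_small.
move=> p hp d T P Z iidZ; rewrite /noisy_loss.
set N := ((m * s)%:R : R) in k_small K_small *.
have N_gt0 : 0 < N by rewrite ltr0n muln_gt0 m_gt0 s_gt0.
have k_gt0' : (0 : R) < k%:R by rewrite ltr0n.
pose A (x : {ffun 'I_(s * m) -> 'I_k}) := \sum_(i < k) `|p i - (count_of x i)%:R / N|.
have noise_le x : ('E_P[(fun t => \sum_(i < k)
      `|p i - ((count_of x i)%:R / N + Z i t / N)|)%R] <=
    (A x + k%:R * (N^-1 * K))%:E)%E.
  have := expectation_l1_noise_le (P := P) (proj1 iidZ)
    (fun i => p i - (count_of x i)%:R / N) N_gt0
    (fun i => abs_moment _ _ P _ (proj1 iidZ i) (iid_has_law iidZ mu_ge0 i)).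
  congr (_ <= _)%E; congr expectation; apply/funext => t /=.
  by apply: eq_bigr => i _; rewrite opprD addrA.
apply: (@le_trans _ _ (\sum_x (sample_prob p x * (A x + k%:R * (N^-1 * K)))%:E)%E).
  apply: lee_sum => x _; rewrite EFinM.
  by apply: lee_wpmul2l; [rewrite lee_fin sample_prob_ge0 | exact: noise_le].
rewrite sumEFin lee_fin; under eq_bigr do rewrite mulrDr.
rewrite big_split /= -mulr_suml sum_sample_prob // mul1r.
have c_gt0 : 0 < alpha / (2 * k%:R) by rewrite divr_gt0 // mulr_gt0.
have := expected_empirical_l1_le hp c_gt0 (n := s * m).
rewrite muln_gt0 s_gt0 m_gt0 (_ : (s * m)%:R = N) ?(mulnC s) //.
move=> /(_ isT) empirical_le.
apply: (le_trans (lerD empirical_le (lexx _))).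
have -> : ((N * (alpha / (2 * k%:R)))^-1 + k%:R * (alpha / (2 * k%:R))) / 2 +
    k%:R * (N^-1 * K) = k%:R / (N * alpha) + alpha / 4 + k%:R * K / N.
  by field; rewrite !pnatr_eq0 -!lt0n s_gt0 m_gt0 k_gt0 gt_eqF.
have sampling_term_le : k%:R / (N * alpha) <= alpha / 4.
  by rewrite ler_pdivrMr ?mulr_gt0 //; nra.
have noise_term_le : k%:R * K / N <= alpha / 2 by rewrite ler_pdivrMr //; nra.
lra.
Qed.

Lemma user_complexity_le_trans (R : realType) (k m : nat) (mu : set R -> \bar R)
    (alpha B B' : R) :
  B <= B' -> user_complexity_le k m mu alpha B -> user_complexity_le k m mu alpha B'.
Proof.
move=> BB' [s [s_gt0 [sB ok]]].
by exists s; split; last split; rewrite ?(le_trans sB).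
Qed.

Lemma user_complexity_le_of_abs_moment (R : realType) (k m : nat)
    (mu : set R -> \bar R) (alpha K : R) :
  (0 < k)%N -> (0 < m)%N -> 0 < alpha -> 0 <= K ->
  (forall B, (0 <= mu B)%E) -> law_abs_moment_le mu K ->
  user_complexity_le k m mu alpha
    (4 * k%:R / (m%:R * alpha ^+ 2) + 2 * k%:R * K / (m%:R * alpha) + 1).
Proof.
move=> k_gt0 m_gt0 alpha_gt0 K_ge0 mu_ge0 abs_moment.
have m_gt0' : (0 : R) < m%:R by rewrite ltr0n.
set X1 := 4 * k%:R / _; set X2 := 2 * k%:R * K / _.
have X1_ge0 : 0 <= X1 by rewrite /X1 divr_ge0 ?mulr_ge0 ?ler0n ?(ltW alpha_gt0).
have X2_ge0 : 0 <= X2 by rewrite /X2 divr_ge0 ?mulr_ge0 ?ler0n ?(ltW alpha_gt0).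
have /andP [s_gt s_lt] := truncn_itv (addr_ge0 X1_ge0 X2_ge0).
exists (Num.truncn (X1 + X2)).+1; split => //; split.
  by rewrite -addn1 natrD lerD2r.
set s := (Num.truncn _).+1 in s_lt *.
apply: (loss_ok_of_abs_moment (K := K)) => //; rewrite natrM.
- have : X1 <= s%:R by lra.
  by rewrite ler_pdivrMr ?mulr_gt0 ?exprn_gt0 //; nra.
- have : X2 <= s%:R by lra.
  by rewrite ler_pdivrMr ?mulr_gt0 //; nra.
Qed.

Lemma laplace_user_complexity (R : realType) (k m : nat) (alpha eps : R) :
  (0 < k)%N -> (0 < m)%N -> 0 < alpha -> 0 < eps ->
  user_complexity_le k m (laplace_prob (2 * m%:R / eps)) alpha
    (128 * (k%:R / (m%:R * alpha ^+ 2) + k%:R / (alpha * eps)) + 1).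
Proof.
move=> k_gt0 m_gt0 alpha_gt0 eps_gt0.
have m_gt0' : (0 : R) < m%:R by rewrite ltr0n.
set b := 2 * m%:R / eps.
have b_gt0 : 0 < b by rewrite divr_gt0 // mulr_gt0.
apply: user_complexity_le_trans
  (user_complexity_le_of_abs_moment (K := 8 * b) k_gt0 m_gt0 alpha_gt0 _ _ _).
- have -> : 2 * k%:R * (8 * b) / (m%:R * alpha) = 32 * (k%:R / (alpha * eps)).
    by rewrite /b; field; rewrite !gt_eqF.
  have t1_ge0 : 0 <= k%:R / (m%:R * alpha ^+ 2).
    by rewrite divr_ge0 ?mulr_ge0 ?ler0n ?(ltW alpha_gt0).
  have t2_ge0 : 0 <= k%:R / (alpha * eps).
    by rewrite divr_ge0 ?mulr_ge0 ?ler0n ?(ltW alpha_gt0) ?(ltW eps_gt0).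
  lra.
- by rewrite mulr_ge0 ?ltW.
- by move=> B; apply: integral_ge0 => x _; rewrite lee_fin laplace_pdf_ge0 ?ltW.
- exact: laplace_abs_moment_le.
Qed.

Lemma ln_5_4_div_gt0 (R : realType) (delta : R) :
  0 < delta -> delta <= 2^-1 -> 0 < ln (5 / 4 / delta).
Proof. by move=> delta_gt0 delta_le; rewrite ln_gt0 // ltr_pdivlMr // mul1r; lra. Qed.

Lemma sqrt_ln_5_4_div_le (R : realType) (delta : R) :
  0 < delta -> delta <= 2^-1 ->
  Num.sqrt (ln (5 / 4 / delta)) <= 2 * Num.sqrt (ln delta^-1).
Proof.
move=> delta_gt0 delta_le.
have inv_ge2 : 2 <= delta^-1.
  by rewrite -[leLHS]invrK lef_pV2 ?posrE ?invr_gt0 //; lra.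
have ln_inv_ge0 : 0 <= ln delta^-1 by rewrite ln_ge0 //; lra.
have ln_le : ln (5 / 4 / delta) <= 4 * ln delta^-1.
  rewrite mulrC lnM ?posrE ?invr_gt0 //.
  have : ln (5 / 4 : R) <= ln delta^-1 by rewrite ler_ln ?posrE ?invr_gt0 //; lra.
  lra.
have -> : 2 * Num.sqrt (ln delta^-1) = Num.sqrt (4 * ln delta^-1).
  rewrite sqrtrM; last lra.
  by rewrite (_ : 4 = 2 ^+ 2) ?sqrtr_sqr ?gtr0_norm //; lra.
by rewrite ler_sqrt; lra.
Qed.

Lemma gaussian_user_complexity (R : realType) (k m : nat) (alpha eps delta : R) :
  (0 < k)%N -> (0 < m)%N -> 0 < alpha -> 0 < eps -> 0 < delta -> delta <= 2^-1 ->
  user_complexity_le k m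
    (normal_prob 0 (2 * m%:R * Num.sqrt (ln (5 / 4 / delta)) / eps)) alpha
    (128 * (k%:R / (m%:R * alpha ^+ 2)
            + k%:R / (alpha * eps) * Num.sqrt (ln (delta^-1))) + 1).
Proof.
move=> k_gt0 m_gt0 alpha_gt0 eps_gt0 delta_gt0 delta_le.
have m_gt0' : (0 : R) < m%:R by rewrite ltr0n.
have sqrtL_gt0 : 0 < Num.sqrt (ln (5 / 4 / delta)) by rewrite sqrtr_gt0 ln_5_4_div_gt0.
set sg := 2 * m%:R * _ / eps.
have sg_gt0 : 0 < sg by rewrite divr_gt0 // !mulr_gt0.
apply: user_complexity_le_trans
  (user_complexity_le_of_abs_moment (K := 16 * sg) k_gt0 m_gt0 alpha_gt0 _ _ _).
- have -> : 2 * k%:R * (16 * sg) / (m%:R * alpha) =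
      64 * (k%:R / (alpha * eps)) * Num.sqrt (ln (5 / 4 / delta)).
    by rewrite /sg; field; rewrite !gt_eqF.
  have t1_ge0 : 0 <= k%:R / (m%:R * alpha ^+ 2).
    by rewrite divr_ge0 ?mulr_ge0 ?ler0n ?(ltW alpha_gt0).
  have t2_ge0 : 0 <= k%:R / (alpha * eps).
    by rewrite divr_ge0 ?mulr_ge0 ?ler0n ?(ltW alpha_gt0) ?(ltW eps_gt0).
  have := ler_wpM2l t2_ge0 (sqrt_ln_5_4_div_le delta_gt0 delta_le).
  lra.
- by rewrite mulr_ge0 ?ltW.
- by move=> B; apply: integral_ge0 => x _; rewrite lee_fin normal_pdf_ge0.
- exact: normal_abs_moment_le.
Qed.

Theorem lemma1 :
  forall R : realType, exists C : R, 0 < C /\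
  (forall (k m : nat) (alpha eps : R),
     (0 < k)%N -> (0 < m)%N -> 0 < alpha -> alpha <= 1 -> 0 < eps ->
     user_complexity_le k m (laplace_prob (2 * m%:R / eps)) alpha
       (C * (k%:R / (m%:R * alpha ^+ 2) + k%:R / (alpha * eps)) + 1)) /\
  (forall (k m : nat) (alpha eps delta : R),
     (0 < k)%N -> (0 < m)%N -> 0 < alpha -> alpha <= 1 -> 0 < eps ->
     eps <= 1 -> 0 < delta -> delta <= 2^-1 ->
     user_complexity_le k m
       (normal_prob 0 (2 * m%:R * Num.sqrt (ln (5 / 4 / delta)) / eps)) alpha
       (C * (k%:R / (m%:R * alpha ^+ 2)
             + k%:R / (alpha * eps) * Num.sqrt (ln (delta^-1))) + 1)).
Proof.
move=> R; exists 128; split=> //; split.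
- by move=> k m alpha eps k_gt0 m_gt0 alpha_gt0 _ eps_gt0;
    exact: laplace_user_complexity.
- by move=> k m alpha eps delta k_gt0 m_gt0 alpha_gt0 _ eps_gt0 _ delta_gt0 delta_le;
    exact: gaussian_user_complexity.
Qed.
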